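(* Let $\mathbb{K}\in\{\mathbb{R},\mathbb{C}\}$ and $\mathcal{A}=(A_1,\ldots,A_d)$ positive semidefinite matrices in $\mathbb{K}^{n\times n}$ (symmetric/Hermitian) that pairwise commute. Then $\mathrm{Opt}(\mathcal{A})=\mathrm{OptSDP}(\mathcal{A})$.
   Context: $\langle x,y\rangle=x^\dagger y$ with $\dagger$ the (conjugate) transpose, $\langle A,X\rangle=\operatorname{Tr}(A^\dagger X)$. $\mathrm{Opt}(\mathcal{A})=\max_{x\in\mathbb{K}^n,\ \|x\|=1}\big(\prod_{i=1}^d\langle x,A_ix\rangle\big)^{1/d}$; $\mathrm{OptSDP}(\mathcal{A})=\max\big\{\big(\prod_{i=1}^d\langle A_i,X\rangle\big)^{1/d}: X\text{ symmetric/Hermitian},\ X\succeq0,\ \operatorname{Tr}X=1\big\}$. *)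

From HB Require Import structures.
From mathcomp Require Import all_boot all_order all_algebra.
From mathcomp Require Import all_classical all_reals.
From mathcomp Require Import exp.
From mathcomp Require Import complex.

Set Implicit Arguments.
Unset Strict Implicit.
Unset Printing Implicit Defensive.
Import Order.TTheory GRing.Theory Num.Theory.
Local Open Scope ring_scope.
Local Open Scope classical_set_scope.

Section RealCase.
Variable R : realType.

Definition innerR (n : nat) (x y : 'cV[R]_n) : R := (x^T *m y) 0 0.
Definition mxinnerR (n : nat) (A X : 'M[R]_n) : R := \tr (A^T *m X).

Definition symR (n : nat) (A : 'M[R]_n) : Prop := A^T = A.
Definition psdR (n : nat) (A : 'M[R]_n) : Prop :=
  symR A /\ forall x : 'cV[R]_n, 0 <= innerR x (A *m x).

Definition OptR (n d : nat) (A : 'I_d -> 'M[R]_n) : R :=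
  sup [set v | exists x : 'cV[R]_n, innerR x x = 1 /\
        v = powR (\prod_(i < d) innerR x (A i *m x)) (d%:R^-1)].

Definition OptSDPR (n d : nat) (A : 'I_d -> 'M[R]_n) : R :=
  sup [set v | exists X : 'M[R]_n, psdR X /\ \tr X = 1 /\
        v = powR (\prod_(i < d) mxinnerR (A i) X) (d%:R^-1)].
End RealCase.

Section ComplexCase.
Variable R : realType.

Definition dagC (m n : nat) (A : 'M[R[i]]_(m, n)) : 'M[R[i]]_(n, m) :=
  (map_mx (@conjc R) A)^T.
Definition innerC (n : nat) (x y : 'cV[R[i]]_n) : R[i] := (dagC x *m y) 0 0.
Definition mxinnerC (n : nat) (A X : 'M[R[i]]_n) : R[i] := \tr (dagC A *m X).

Definition hermC (n : nat) (A : 'M[R[i]]_n) : Prop := dagC A = A.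
(* positive semidefinite: Hermitian and x^dagger A x is a nonnegative real *)
Definition psdC (n : nat) (A : 'M[R[i]]_n) : Prop :=
  hermC A /\ forall x : 'cV[R[i]]_n, 0 <= innerC x (A *m x).

(* for Hermitian A the values <x,Ax>, <A,X> are real; we take real parts *)
Definition OptC (n d : nat) (A : 'I_d -> 'M[R[i]]_n) : R :=
  sup [set v | exists x : 'cV[R[i]]_n, innerC x x = 1 /\
        v = powR (\prod_(i < d) complex.Re (innerC x (A i *m x))) (d%:R^-1)].

Definition OptSDPC (n d : nat) (A : 'I_d -> 'M[R[i]]_n) : R :=
  sup [set v | exists X : 'M[R[i]]_n, psdC X /\ \tr X = 1 /\
        v = powR (\prod_(i < d) complex.Re (mxinnerC (A i) X)) (d%:R^-1)].
End ComplexCase.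

From Pilot Require Import Defs.
From HB Require Import structures.
From mathcomp Require Import all_boot all_order all_algebra.
From mathcomp Require Import all_classical all_reals.
From mathcomp Require Import exp complex spectral.
Import Order.TTheory GRing.Theory Num.Theory.
Set Implicit Arguments.
Unset Strict Implicit.
Unset Printing Implicit Defensive.
Local Open Scope ring_scope.
Local Open Scope sesquilinear_scope.

(* Both quantities maximize the same function of a moment vector: Opt over
   the moments (x^* A_i x)_i of unit vectors, OptSDP over the moments
   (<A_i, X>)_i of density matrices (X psd, tr X = 1).  A unit vector x gives
   the density matrix x x^*, so it suffices to realize the moments of any
   density matrix by a unit vector; only symmetry of the A_i is needed.
   - Complex case: a unitary V diagonalizes all A_i simultaneously
     (cotrigonalization of commuting normal matrices); then x = V y with
     |y_k|^2 = (V^* X V)_kk works.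
   - Real case: the real and imaginary parts of the columns of V form a
     resolution of the identity sum_j e_j e_j^T = 1 by 2n real common
     eigenvectors.  With weights q_j = e_j^T X e_j the moments of X are
     sum_j q_j lam_j.  These eigenvectors need not be orthogonal, so the
     weights are first merged inside classes of equal eigenvalue tuples;
     class representatives are orthogonal, and the sum of the normalized
     representatives scaled by the square roots of the merged weights is
     the required vector. *)

Lemma col_eigen (F : comPzRingType) n (A V : 'M[F]_n) (delta : 'rV[F]_n) k :
  A *m V = V *m diag_mx delta -> A *m col k V = delta 0 k *: col k V.
Proof.
move=> /(congr1 (col k)); rewrite !colE mulmxA => ->.
by rewrite -!colE mul_mx_diag; apply/colP => a; rewrite !mxE mulrC.
Qed.

Section Codiagonalization.
Variable C : numClosedFieldType.

Lemma commuting_hermitian_codiag n d (A : 'I_d -> 'M[C]_n) :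
  (forall i, A i ^t* = A i) -> (forall i j, A i *m A j = A j *m A i) ->
  exists V : 'M[C]_n, exists delta : 'I_d -> 'rV[C]_n,
  [/\ V *m V ^t* = 1%:M, V ^t* *m V = 1%:M,
      forall i, A i *m V = V *m diag_mx (delta i) &
      forall i k, (delta i 0 k)^* = delta i 0 k].
Proof.
move=> Aherm Acomm.
have [] := @cotrigonalization C n [seq A i | i <- enum 'I_d].
  by move=> _ _ /mapP[i _ ->] /mapP[j _ ->]; exact: Acomm.
move=> P Punitary /allP Ptrig.
have PPt : P *m P ^t* = 1%:M by apply/unitarymxP.
have PtP : P ^t* *m P = 1%:M by rewrite -[_ *m P]mul1mx mulmxA mulmxKtV.
pose D i := P *m A i *m P ^t*.
have Dherm i : D i ^t* = D i by rewrite /D !trmx_mul !map_mxM trmxCK Aherm mulmxA.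
have Ddiag i j k : j != k -> D i j k = 0.
  have /is_trig_mxP Dtrig := Ptrig _ (map_f (fun i => A i) (mem_enum _ i)).
  move: Dtrig; rewrite /similar_to conjymx // -/(D i) => Dtrig.
  case: (ltngtP j k) => [jk|kj|/val_inj->]; last by rewrite eqxx.
  - by move=> _; exact: Dtrig.
  - move=> _; have : (D i ^t*) k j = 0 by rewrite Dherm; exact: Dtrig.
    by rewrite !mxE => /eqP; rewrite conjC_eq0 => /eqP.
exists (P ^t*), (fun i => \row_k D i k k); split; rewrite ?trmxCK //.
- move=> i; have -> : diag_mx (\row_k D i k k) = D i.
    apply/matrixP => j k; rewrite [LHS]mxE; have [->|jk] := eqVneq j k.
      by rewrite mulr1n [LHS]mxE.
    by rewrite mulr0n Ddiag.
  by rewrite /D !mulmxA PtP mul1mx.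
- by move=> i k; rewrite mxE -[in RHS]Dherm !mxE.
Qed.

Lemma conjmx_diag_entry n (M X : 'M[C]_n) k :
  (M ^t* *m X *m M) k k = ((col k M) ^t* *m (X *m col k M)) 0 0.
Proof.
rewrite -mulmxA !mxE; apply: eq_bigr => j _; rewrite !mxE; congr (_ * _).
by apply: eq_bigr => l _; rewrite !mxE.
Qed.

Lemma diag_form n (delta : 'rV[C]_n) (y : 'cV[C]_n) :
  (y ^t* *m (diag_mx delta *m y)) 0 0 = \sum_k delta 0 k * ((y k 0)^* * y k 0).
Proof.
rewrite mul_diag_mx !mxE; apply: eq_bigr => k _; rewrite !mxE.
by rewrite mulrCA mulrA.
Qed.

(* Writing [A_i = V diag(delta_i) V^*], take
   [x = V y] with [|y_k|^2 = (V^* X V)_kk]. *)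
Lemma hermitian_moment_vector n d (A : 'I_d -> 'M[C]_n) (X : 'M[C]_n) :
  (forall i, A i ^t* = A i) -> (forall i j, A i *m A j = A j *m A i) ->
  (forall v : 'cV[C]_n, 0 <= (v ^t* *m (X *m v)) 0 0) ->
  exists x : 'cV[C]_n, (x ^t* *m x) 0 0 = \tr X /\
    forall i, (x ^t* *m (A i *m x)) 0 0 = \tr (A i *m X).
Proof.
move=> Aherm Acomm Xpsd.
have [V [delta [VVt VtV AV _]]] := commuting_hermitian_codiag Aherm Acomm.
pose Y := V ^t* *m X *m V.
pose y : 'cV[C]_n := \col_k sqrtC (Y k k).
have Yk_ge0 k : 0 <= Y k k by rewrite conjmx_diag_entry.
have y_norm2 k : (y k 0)^* * y k 0 = Y k k.
  rewrite mxE conj_Creal; first by rewrite -expr2 sqrtCK.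
  by rewrite ger0_real // sqrtC_ge0.
have moment (B : 'M[C]_n) (beta : 'rV[C]_n) : B *m V = V *m diag_mx beta ->
    ((V *m y) ^t* *m (B *m (V *m y))) 0 0 = \tr (B *m X).
  move=> BV; rewrite trmx_mul map_mxM !mulmxA -(mulmxA _ B V) BV mulmxA.
  rewrite -(mulmxA _ (V ^t*) V) VtV mulmx1 -mulmxA diag_form.
  under eq_bigr do rewrite y_norm2.
  transitivity (\tr (diag_mx beta *m Y)).
    by rewrite mul_diag_mx /mxtrace; under [RHS]eq_bigr do rewrite mxE.
  by rewrite /Y mulmxA mxtrace_mulC !mulmxA -BV -(mulmxA B V) VVt mulmx1.
exists (V *m y); split; last by move=> i; exact: moment (AV i).
have := @moment 1%:M (const_mx 1).
by rewrite diag_const_mx mulmx1 !mul1mx => /(_ erefl).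
Qed.
End Codiagonalization.

Section ClassRepresentatives.
Variables (R : numDomainType) (I : finType) (T : eqType).
Variables (cls : I -> T) (q : I -> R).

Definition rep (k : I) : I := odflt k [pick l | (cls l == cls k) && (q l != 0)].

Definition merged_weight (j : I) : R := \sum_(k | rep k == j) q k.

Lemma rep_spec k : q k != 0 -> cls (rep k) = cls k /\ q (rep k) != 0.
Proof.
rewrite /rep; case: pickP => [l /andP[/eqP -> ->] //|/(_ k)].
by rewrite eqxx => /= ->.
Qed.

Lemma rep_congr k l : cls k = cls l -> q k != 0 -> rep k = rep l.
Proof.
rewrite /rep => ckl qk; rewrite ckl; case: pickP => [//|/(_ k)].
by rewrite ckl eqxx qk.
Qed.

Lemma merged_weight_support j :
  merged_weight j != 0 -> exists2 k, q k != 0 & rep k = j.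
Proof.
move=> Qj; have /existsP[k /andP[/eqP rkj qk]] :
    [exists k, (rep k == j) && (q k != 0)].
  apply: contraNT Qj; rewrite negb_exists => /forallP qk0.
  by apply/eqP/big1 => k rkj; move: (qk0 k); rewrite rkj /= negbK => /eqP.
by exists k.
Qed.

Lemma merged_weight_nonzero j : merged_weight j != 0 -> q j != 0.
Proof. by case/merged_weight_support => k /rep_spec[_ +] <-. Qed.

Lemma merged_weight_separated j j' :
  merged_weight j != 0 -> merged_weight j' != 0 -> cls j = cls j' -> j = j'.
Proof.
case/merged_weight_support => k qk <-; case/merged_weight_support => k' qk' <-.
have [-> _] := rep_spec qk; have [-> _] := rep_spec qk'.
by move/rep_congr; apply.
Qed.

Lemma merged_weight_sum (F : T -> R) :
  \sum_j merged_weight j * F (cls j) = \sum_k q k * F (cls k).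
Proof.
rewrite [RHS](partition_big rep xpredT) //=; apply: eq_bigr => j _.
rewrite /merged_weight mulr_suml; apply: eq_bigr => k /eqP <-.
have [->|qk] := eqVneq (q k) 0; first by rewrite !mul0r.
by have [-> _] := rep_spec qk.
Qed.

End ClassRepresentatives.

Section RealEigenvectors.
Variable R : realType.

Lemma innerRZl n (c : R) (u v : 'cV[R]_n) : innerR (c *: u) v = c * innerR u v.
Proof. by rewrite /innerR linearZ /= -scalemxAl mxE. Qed.

Lemma innerRZr n (c : R) (u v : 'cV[R]_n) : innerR u (c *: v) = c * innerR u v.
Proof. by rewrite /innerR -scalemxAr mxE. Qed.

Lemma eigvec_orthogonal n (B : 'M[R]_n) (u v : 'cV[R]_n) (a b : R) :
  B^T = B -> B *m u = a *: u -> B *m v = b *: v -> a != b -> innerR u v = 0.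
Proof.
move=> Bsym Bu Bv ab.
have : (a - b) * innerR u v = 0.
  rewrite mulrBl -innerRZl -innerRZr -Bu -Bv /innerR trmx_mul Bsym.
  by rewrite mulmxA subrr.
by move/eqP; rewrite mulf_eq0 subr_eq0 (negbTE ab) => /eqP.
Qed.

Lemma innerR_suml n (I : finType) (u : I -> 'cV[R]_n) (v : 'cV[R]_n) :
  innerR (\sum_j u j) v = \sum_j innerR (u j) v.
Proof. by rewrite /innerR raddf_sum mulmx_suml summxE. Qed.

Lemma innerR_sumr n (I : finType) (u : 'cV[R]_n) (v : I -> 'cV[R]_n) :
  innerR u (\sum_j v j) = \sum_j innerR u (v j).
Proof. by rewrite /innerR mulmx_sumr summxE. Qed.

Lemma form_orthonormal_combination n (I : finType) (B : 'M[R]_n)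
    (e : I -> 'cV[R]_n) (mu c : I -> R) :
  (forall j, B *m e j = mu j *: e j) ->
  (forall j, c j != 0 -> innerR (e j) (e j) = 1) ->
  (forall j j', c j != 0 -> c j' != 0 -> j != j' -> innerR (e j) (e j') = 0) ->
  innerR (\sum_j c j *: e j) (B *m \sum_j c j *: e j) = \sum_j c j ^+ 2 * mu j.
Proof.
move=> Be e_unit e_orth; rewrite innerR_suml; apply: eq_bigr => j _.
rewrite mulmx_sumr innerRZl innerR_sumr.
have [->|cj] := eqVneq (c j) 0; first by rewrite expr2 !mul0r.
rewrite (bigD1 j) //= big1 ?addr0.
  by rewrite -scalemxAr Be scalerA innerRZr e_unit // mulr1 mulrA -expr2.
move=> j' j'j; rewrite -scalemxAr Be scalerA innerRZr.
have [->|cj'] := eqVneq (c j') 0; first by rewrite !mul0r.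
by rewrite e_orth ?mulr0 // eq_sym.
Qed.

(* Weights
   are merged inside classes of equal eigenvalue tuples, and representatives
   of distinct classes are orthogonal, so [x = sum_j sqrt(Q_j) e_j] works. *)
Lemma common_eigenvector_mixture n d (I : finType) (A : 'I_d -> 'M[R]_n)
    (e : I -> 'cV[R]_n) (lam : I -> 'I_d -> R) (q : I -> R) :
  (forall i, (A i)^T = A i) -> (forall j i, A i *m e j = lam j i *: e j) ->
  (forall j, 0 <= q j) -> (forall j, q j != 0 -> innerR (e j) (e j) = 1) ->
  exists x : 'cV[R]_n, innerR x x = \sum_j q j /\
    forall i, innerR x (A i *m x) = \sum_j q j * lam j i.
Proof.
move=> Asym Ae q_ge0 e_unit.
pose cls j : 'rV[R]_d := \row_i lam j i.
pose Q := merged_weight cls q.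
pose c j := Num.sqrt (Q j).
have Q_ge0 j : 0 <= Q j by apply: sumr_ge0.
have Q_c j : c j != 0 -> Q j != 0 by apply: contra_neq => Qj; rewrite /c Qj sqrtr0.
have moment (B : 'M[R]_n) (mu : 'rV[R]_d -> R) :
    (forall j, B *m e j = mu (cls j) *: e j) ->
    innerR (\sum_j c j *: e j) (B *m \sum_j c j *: e j) = \sum_j q j * mu (cls j).
  move=> Be; rewrite (@form_orthonormal_combination _ _ _ _ (fun j => mu (cls j))) //.
  - rewrite -(merged_weight_sum _ q).
    by apply: eq_bigr => j _; rewrite /c sqr_sqrtr.
  - by move=> j /Q_c/merged_weight_nonzero/e_unit.
  move=> j j' /Q_c Qj /Q_c Qj' jj'.
  have [i lam_jj'] : exists i, lam j i != lam j' i.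
    apply/existsP; apply: contraR jj' => /existsPn same.
    apply/eqP/(merged_weight_separated Qj Qj')/rowP => i; rewrite !mxE.
    by move: (same i); rewrite negbK => /eqP.
  exact: eigvec_orthogonal (Asym i) (Ae j i) (Ae j' i) lam_jj'.
exists (\sum_j c j *: e j); split.
  rewrite -[v in innerR _ v]mul1mx (moment _ (fun _ => 1)) => [|j].
    by apply: eq_bigr => j _; rewrite mulr1.
  by rewrite mul1mx scale1r.
move=> i; rewrite (moment _ (fun r => r 0 i)) => [|j]; last by rewrite Ae mxE.
by apply: eq_bigr => j _; rewrite mxE.
Qed.

Lemma innerR_self_eq0 n (v : 'cV[R]_n) : innerR v v = 0 -> v = 0.
Proof.
rewrite /innerR mxE => /psumr_eq0P v0; apply/colP => k.
have /v0 : forall l, true -> 0 <= v^T 0 l * v l 0.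
  by move=> l _; rewrite mxE -expr2 sqr_ge0.
by move/(_ k isT)/eqP; rewrite mxE mulf_eq0 orbb => /eqP ->; rewrite mxE.
Qed.

Lemma innerR_normalize n (v : 'cV[R]_n) : innerR v v != 0 ->
  let s := Num.sqrt (innerR v v) in innerR (s^-1 *: v) (s^-1 *: v) = 1.
Proof.
move=> v0 s; rewrite innerRZl innerRZr mulrA -expr2 exprVn sqr_sqrtr ?mulVf //.
by rewrite /innerR mxE; apply: sumr_ge0 => k _; rewrite mxE -expr2 sqr_ge0.
Qed.

Lemma frame_trace n (I : finType) (e : I -> 'cV[R]_n) (B X : 'M[R]_n) :
  \sum_j e j *m (e j)^T = 1%:M ->
  \sum_j innerR (e j) (X *m (B *m e j)) = \tr (B *m X).
Proof.
move=> frame; transitivity (\sum_j \tr (X *m B *m (e j *m (e j)^T))).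
  apply: eq_bigr => j _.
  by rewrite /innerR -trace_mx11 mxtrace_mulC !mulmxA.
by rewrite -raddf_sum -mulmx_sumr frame mulmx1 mxtrace_mulC.
Qed.

(* The weights
   are [q_j = e_j^T X e_j], attached to the normalized [e_j]. *)
Lemma frame_moment_vector n d (I : finType) (A : 'I_d -> 'M[R]_n)
    (e : I -> 'cV[R]_n) (lam : I -> 'I_d -> R) (X : 'M[R]_n) :
  (forall i, (A i)^T = A i) -> (forall j i, A i *m e j = lam j i *: e j) ->
  \sum_j e j *m (e j)^T = 1%:M -> (forall v, 0 <= innerR v (X *m v)) ->
  exists x : 'cV[R]_n, innerR x x = \tr X /\
    forall i, innerR x (A i *m x) = \tr (A i *m X).
Proof.
move=> Asym Ae frame Xpsd.
pose q j := innerR (e j) (X *m e j).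
pose w j := (Num.sqrt (innerR (e j) (e j)))^-1 *: e j.
have moment (B : 'M[R]_n) (mu : I -> R) : (forall j, B *m e j = mu j *: e j) ->
    \sum_j q j * mu j = \tr (B *m X).
  move=> Be; rewrite -(frame_trace B X frame); apply: eq_bigr => j _.
  by rewrite mulrC -innerRZr scalemxAr -Be.
have w_eig j i : A i *m w j = lam j i *: w j.
  by rewrite -scalemxAr Ae !scalerA mulrC.
have w_unit j : q j != 0 -> innerR (w j) (w j) = 1.
  move=> qj; apply: innerR_normalize; apply: contra qj => /eqP/innerR_self_eq0.
  by rewrite /q => ->; rewrite /innerR trmx0 mul0mx mxE.
have [x [xx xA]] := common_eigenvector_mixture Asym w_eig (fun j => Xpsd _) w_unit.
exists x; split.
  rewrite xx -[M in \tr M]mul1mx -(moment _ (fun _ => 1)) => [|j].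
    by apply: eq_bigr => j _; rewrite mulr1.
  by rewrite mul1mx scale1r.
by move=> i; rewrite xA (moment _ _ (Ae^~ i)).
Qed.

End RealEigenvectors.

Section Complexification.
Variable R : rcfType.
Local Notation C := R[i].

Definition ReM m n (M : 'M[C]_(m, n)) : 'M[R]_(m, n) := map_mx (@complex.Re R) M.
Definition ImM m n (M : 'M[C]_(m, n)) : 'M[R]_(m, n) := map_mx (@complex.Im R) M.
Definition CM m n (A : 'M[R]_(m, n)) : 'M[C]_(m, n) := map_mx (real_complex R) A.

Lemma Re_sum (I : Type) (r : seq I) (P : pred I) (F : I -> C) :
  complex.Re (\sum_(i <- r | P i) F i) = \sum_(i <- r | P i) complex.Re (F i).
Proof. by apply: (big_morph (@complex.Re R)) => // [[a b] [c e]]. Qed.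

Lemma Im_sum (I : Type) (r : seq I) (P : pred I) (F : I -> C) :
  complex.Im (\sum_(i <- r | P i) F i) = \sum_(i <- r | P i) complex.Im (F i).
Proof. by apply: (big_morph (@complex.Im R)) => // [[a b] [c e]]. Qed.

Lemma Re_realM (r : R) (z : C) : complex.Re (r%:C%C * z) = r * complex.Re z.
Proof. by case: z => x y /=; rewrite mul0r subr0. Qed.

Lemma Im_realM (r : R) (z : C) : complex.Im (r%:C%C * z) = r * complex.Im z.
Proof. by case: z => x y /=; rewrite mul0r addr0. Qed.

Lemma conj_fixed_real (z : C) : z^* = z -> z = (complex.Re z)%:C%C.
Proof.
case: z => x y [] /eqP; rewrite eq_sym -subr_eq0 opprK -mulr2n mulrn_eq0 /=.
by move/eqP->.
Qed.

Lemma CM_hermitian n (A : 'M[R]_n) : A^T = A -> CM A ^t* = CM A.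
Proof.
move=> Asym; apply/matrixP => i j; rewrite !mxE -[in RHS]Asym mxE.
by apply/eqP; rewrite eq_complex /= oppr0 !eqxx.
Qed.

Lemma realified_eigvec n (A : 'M[R]_n) (v : 'cV[C]_n) (a : R) :
  CM A *m v = a%:C%C *: v -> A *m ReM v = a *: ReM v /\ A *m ImM v = a *: ImM v.
Proof.
move=> Av; split; apply/colP => k; move/(congr1 (fun w : 'cV[C]_n => w k 0)): Av.
- move/(congr1 (@complex.Re R)); rewrite !mxE Re_sum Re_realM => <-.
  by apply: eq_bigr => l _; rewrite !mxE Re_realM.
- move/(congr1 (@complex.Im R)); rewrite !mxE Im_sum Im_realM => <-.
  by apply: eq_bigr => l _; rewrite !mxE Im_realM.
Qed.

Lemma unitary_real_frame n (V : 'M[C]_n) : V *m V ^t* = 1%:M ->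
  \sum_k (ReM (col k V) *m (ReM (col k V))^T + ImM (col k V) *m (ImM (col k V))^T)
  = 1%:M.
Proof.
move=> VVt; apply/matrixP => a b.
transitivity (complex.Re ((V *m V ^t*) a b)); last first.
  by rewrite VVt !mxE; case: (a == b).
rewrite summxE !mxE Re_sum; apply: eq_bigr => k _.
rewrite !mxE !big_ord1 !mxE.
by move: (V a k) (V b k) => [x y] [x' y'] /=; rewrite mulrN opprK.
Qed.

(* Commuting real symmetric matrices admit a resolution of the identity by
   [2n] common eigenvectors: the real and imaginary parts of the columns of a
   unitary matrix diagonalizing their complexifications. *)
Lemma real_eigenframe n d (A : 'I_d -> 'M[R]_n) :
  (forall i, (A i)^T = A i) -> (forall i j, A i *m A j = A j *m A i) ->
  exists (e : 'I_n * bool -> 'cV[R]_n) (lam : 'I_n * bool -> 'I_d -> R),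
    \sum_j e j *m (e j)^T = 1%:M /\ forall j i, A i *m e j = lam j i *: e j.
Proof.
move=> Asym Acomm.
have CAcomm i j : CM (A i) *m CM (A j) = CM (A j) *m CM (A i).
  by rewrite -!map_mxM Acomm.
have [V [delta [VVt _ AV delta_real]]] :=
  commuting_hermitian_codiag (fun i => CM_hermitian (Asym i)) CAcomm.
pose e (j : 'I_n * bool) := (if j.2 then @ReM n 1 else @ImM n 1) (col j.1 V).
exists e, (fun j i => complex.Re (delta i 0 j.1)); split.
  rewrite -(unitary_real_frame VVt).
  rewrite (eq_bigr (fun j => e (j.1, j.2) *m (e (j.1, j.2))^T)); last by case.
  rewrite -(pair_bigA _ (fun k b => e (k, b) *m (e (k, b))^T)).
  by apply: eq_bigr => k _; rewrite big_bool.
move=> [k b] i; have := col_eigen k (AV i).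
rewrite {1}(conj_fixed_real (delta_real i k)) => /realified_eigvec[ReV ImV].
by case: b; rewrite /e.
Qed.

End Complexification.

Section RealCase.
Variable R : realType.

Lemma rank_one_densityR n (x : 'cV[R]_n) : innerR x x = 1 ->
  [/\ psdR (x *m x^T), \tr (x *m x^T) = 1 &
      forall B : 'M[R]_n, mxinnerR B (x *m x^T) = innerR x (B *m x)].
Proof.
move=> x_unit; split.
- split; first by rewrite /symR trmx_mul trmxK.
  move=> y; rewrite /innerR !mulmxA -mulmxA [in X in 0 <= X]mxE big_ord1.
  have -> : (y^T *m x) 0 0 = (x^T *m y) 0 0.
    by rewrite !mxE; apply: eq_bigr => j _; rewrite !mxE mulrC.
  by rewrite -expr2 sqr_ge0.
- by rewrite mxtrace_mulC trace_mx11.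
- move=> B; rewrite /mxinnerR mulmxA mxtrace_mulC trace_mx11.
  have -> : x^T *m (B^T *m x) = (x^T *m (B *m x))^T.
    by rewrite !trmx_mul trmxK mulmxA.
  by rewrite mxE.
Qed.

Lemma densityR_moment_vector n d (A : 'I_d -> 'M[R]_n) (X : 'M[R]_n) :
  (forall i, (A i)^T = A i) -> (forall i j, A i *m A j = A j *m A i) ->
  psdR X -> \tr X = 1 ->
  exists x : 'cV[R]_n, innerR x x = 1 /\
    forall i, innerR x (A i *m x) = mxinnerR (A i) X.
Proof.
move=> Asym Acomm [_ Xpsd] trX.
have [e [lam [frame Ae]]] := real_eigenframe Asym Acomm.
have [x [x_norm xA]] := frame_moment_vector Asym Ae frame Xpsd.
by exists x; split => [|i]; rewrite ?x_norm ?xA /mxinnerR ?Asym.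
Qed.

Lemma OptR_eq_OptSDPR n d (A : 'I_d -> 'M[R]_n) :
  (forall i, (A i)^T = A i) -> (forall i j, A i *m A j = A j *m A i) ->
  OptR A = OptSDPR A.
Proof.
move=> Asym Acomm; rewrite /OptR /OptSDPR; congr sup.
apply/seteqP; split => v /=.
- move=> [x [x_unit ->]]; have [Xpsd trX XA] := rank_one_densityR x_unit.
  exists (x *m x^T); do 2!split => //; congr powR.
  by apply: eq_bigr => i _; rewrite XA.
- move=> [X [Xpsd [trX ->]]].
  have [x [x_unit xA]] := densityR_moment_vector Asym Acomm Xpsd trX.
  by exists x; split => //; congr powR; apply: eq_bigr => i _; rewrite xA.
Qed.

End RealCase.

Section ComplexCase.
Variable R : realType.
Local Notation C := R[i].

Lemma dagCE m n (M : 'M[C]_(m, n)) : dagC M = M ^t*.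
Proof. by rewrite /dagC map_trmx. Qed.

Lemma rank_one_densityC n (x : 'cV[C]_n) : innerC x x = 1 ->
  [/\ psdC (x *m dagC x), \tr (x *m dagC x) = 1 &
      forall B : 'M[C]_n, Defs.hermC B -> mxinnerC B (x *m dagC x) = innerC x (B *m x)].
Proof.
move=> x_unit; split.
- split; first by rewrite /Defs.hermC !dagCE trmx_mul map_mxM trmxCK.
  move=> y; rewrite /innerC !mulmxA -mulmxA [in X in 0 <= X]mxE big_ord1.
  have -> : (dagC x *m y) 0 0 = ((dagC y *m x) 0 0)^*.
    rewrite !mxE rmorph_sum; apply: eq_bigr => j _.
    by rewrite !mxE rmorphM /= conjCK mulrC.
  exact: mul_conjC_ge0.
- by rewrite mxtrace_mulC trace_mx11.
- by move=> B Bherm; rewrite /mxinnerC Bherm mulmxA mxtrace_mulC trace_mx11.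
Qed.

Lemma densityC_moment_vector n d (A : 'I_d -> 'M[C]_n) (X : 'M[C]_n) :
  (forall i, Defs.hermC (A i)) -> (forall i j, A i *m A j = A j *m A i) ->
  psdC X -> \tr X = 1 ->
  exists x : 'cV[C]_n, innerC x x = 1 /\
    forall i, innerC x (A i *m x) = mxinnerC (A i) X.
Proof.
move=> Aherm Acomm [_ Xpsd] trX.
have Aherm' i : A i ^t* = A i by rewrite -dagCE Aherm.
have Xpsd' (v : 'cV[C]_n) : 0 <= (v ^t* *m (X *m v)) 0 0 by have := Xpsd v; rewrite /innerC dagCE.
have [x [x_norm xA]] := hermitian_moment_vector Aherm' Acomm Xpsd'.
exists x; split => [|i]; first by rewrite /innerC dagCE x_norm.
by rewrite /innerC /mxinnerC dagCE xA Aherm.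
Qed.

Lemma OptC_eq_OptSDPC n d (A : 'I_d -> 'M[C]_n) :
  (forall i, Defs.hermC (A i)) -> (forall i j, A i *m A j = A j *m A i) ->
  OptC A = OptSDPC A.
Proof.
move=> Aherm Acomm; rewrite /OptC /OptSDPC; congr sup.
apply/seteqP; split => v /=.
- move=> [x [x_unit ->]]; have [Xpsd trX XA] := rank_one_densityC x_unit.
  exists (x *m dagC x); do 2!split => //; congr powR.
  by apply: eq_bigr => i _; rewrite XA.
- move=> [X [Xpsd [trX ->]]].
  have [x [x_unit xA]] := densityC_moment_vector Aherm Acomm Xpsd trX.
  by exists x; split => //; congr powR; apply: eq_bigr => i _; rewrite xA.
Qed.

End ComplexCase.

Theorem mainTheorem7 (R : realType) (n d : nat) :
  (forall A : 'I_d -> 'M[R]_n,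
     (forall i, psdR (A i)) ->
     (forall i j, A i *m A j = A j *m A i) ->
     OptR A = OptSDPR A) /\
  (forall A : 'I_d -> 'M[R[i]]_n,
     (forall i, psdC (A i)) ->
     (forall i j, A i *m A j = A j *m A i) ->
     OptC A = OptSDPC A).
Proof.
split=> A Apsd Acomm.
- by apply: OptR_eq_OptSDPR Acomm => i; case: (Apsd i).
- by apply: OptC_eq_OptSDPC Acomm => i; case: (Apsd i).
Qed.
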